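(* Let $\alpha\in\mathbb{Q}(i)\setminus\mathbb{R}$ with $|\alpha|>1$, with minimal primitive polynomial $P_\alpha(X)=a_2X^2+a_1X+a_0$ ($a_0,a_1,a_2\in\mathbb{Z}$ coprime, $a_2>0$, $P_\alpha(\alpha)=0$), $\mathcal{D}=\{0,\ldots,|a_0|-1\}$ and $\Lambda_\alpha=\mathbb{Z}[\alpha]\cap\alpha^{-1}\mathbb{Z}[\alpha^{-1}]$. For $N\in\Lambda_\alpha$ let $D(N)=\{d\in\mathcal{D}: \alpha N+d\in\Lambda_\alpha\}$. Then for every $N\in\Lambda_\alpha$ there exists $r\in\mathbb{Z}$ such that $D(N)=\mathcal{D}\cap(a_2\mathbb{Z}+r)$. *)

From HB Require Import structures.
From mathcomp Require Import all_boot all_order all_algebra all_field.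
Set Implicit Arguments. Unset Strict Implicit. Unset Printing Implicit Defensive.
Import Order.TTheory GRing.Theory Num.Theory.
Local Open Scope ring_scope.

Definition inQi (a : algC) : Prop :=
  exists x y : rat, a = ratr x + 'i * ratr y.

Definition inZpow (a z : algC) : Prop :=
  exists p : {poly int}, z = (map_poly (intr : int -> algC) p).[a].

Definition inZinvpow (a z : algC) : Prop :=
  exists p : {poly int}, z = a^-1 * (map_poly (intr : int -> algC) p).[a^-1].

Definition Lambda (a z : algC) : Prop := inZpow a z /\ inZinvpow a z.

(* With g = alpha^-1, a root of the primitive P = a0 X^2 + a1 X + a2, one has
   alpha N = q(g) for some q in Z[X], so alpha N + d = (q(0) + d) + g q'(g) with
   q' = (q - q(0)) / X, and alpha N + d lies in Z[alpha] anyway.  Membership in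
   Lambda is thus decided by whether the integer m = q(0) + d lies in g Z[g].
   If m = g p(g), then P, irreducible over Q because g is not real, divides
   X p - m; by Gauss's lemma it does so in Z[X], and constant terms give a2 | m.
   Conversely a2 = -g (a0 g + a1).  So r = -q(0) works. *)

From HB Require Import structures.
From mathcomp Require Import all_boot all_order all_algebra all_field.
From mathcomp Require Import ring.

Set Implicit Arguments.
Unset Strict Implicit.
Unset Printing Implicit Defensive.
Import Order.TTheory GRing.Theory Num.Theory.
Local Open Scope ring_scope.

Local Notation mapZ := (map_poly (intr : int -> algC)).

Lemma horner_coef0_drop1 (x : algC) (q : {poly int}) :
  (mapZ q).[x] = (q`_0)%:~R + x * (mapZ (drop_poly 1 q)).[x].
Proof.
rewrite -{1}(poly_take_drop 1 q).
have -> : take_poly 1 q = (q`_0)%:P.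
  by apply/polyP => i; rewrite coef_take_poly coefC; case: i.
by rewrite rmorphD rmorphM /= map_polyC map_polyX /= !hornerE mulrC.
Qed.

Lemma nonreal_root_size_le2 (g : algC) (p : {poly int}) :
  g \isn't Num.real -> (size p <= 2)%N -> root (mapZ p) g -> p = 0.
Proof.
move=> gNR size_p; rewrite rootE (@horner_coef_wide _ 2); last first.
  by rewrite size_map_inj_poly //; exact: intr_inj.
rewrite !big_ord_recl big_ord0 /= !coef_map /= expr0 expr1 mulr1 addr0.
rewrite addrC addr_eq0 => /eqP p1gE.
have p1_0 : p`_1 = 0.
  apply/eqP; apply: contraNT gNR => p1_neq0; rewrite -(intr_eq0 algC) in p1_neq0.
  have -> : g = - (p`_0)%:~R / (p`_1)%:~R by rewrite -p1gE mulrAC divff // mul1r.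
  by rewrite rpredM ?rpredN ?rpredV ?realz.
have p0_0 : p`_0 = 0.
  by apply/eqP; rewrite -(intr_eq0 algC) -oppr_eq0 -p1gE p1_0 mul0r.
by apply/polyP => -[|[|i]]; rewrite coef0 // nth_default // (leq_trans size_p).
Qed.

Lemma dvdz_coef0 (p q : {poly int}) :
  (zcontents p %| 1)%Z -> p %| q -> (p`_0 %| q`_0)%Z.
Proof.
rewrite dvdz1 => /eqP c_unit /dvdpP_int[r ->].
have p0E : p`_0 = zcontents p * (zprimitive p)`_0.
  by rewrite {1}[p]zpolyEprim coefZ.
by rewrite coef0M dvdz_mulr // dvdzE p0E abszM c_unit mul1n.
Qed.

Definition quad (c2 c1 c0 : int) : {poly int} := c2%:P * 'X^2 + c1%:P * 'X + c0%:P.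

Lemma coef_quad (c2 c1 c0 : int) i : (quad c2 c1 c0)`_i = [:: c0; c1; c2]`_i.
Proof.
rewrite !coefD !coefCM coefXn coefX coefC.
by case: i => [|[|[|i]]] /=; rewrite ?mulr0 ?mulr1 ?addr0 ?add0r // nth_nil.
Qed.

Lemma size_quad (c2 c1 c0 : int) : (size (quad c2 c1 c0) <= 3)%N.
Proof. by apply/leq_sizeP => -[|[|[|i]]] // _; rewrite coef_quad /= nth_nil. Qed.

Lemma horner_quad (c2 c1 c0 : int) (x : algC) :
  (mapZ (quad c2 c1 c0)).[x] = c2%:~R * x ^+ 2 + c1%:~R * x + c0%:~R.
Proof. by rewrite !rmorphD !rmorphM /= map_polyX !map_polyC !hornerE /=. Qed.

Section IntegersInGZg.

Variables (g : algC) (c2 c1 c0 : int).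
Hypotheses (gNR : g \isn't Num.real) (c_coprime : gcdz (gcdz c2 c1) c0 = 1).
Hypothesis g_root : root (mapZ (quad c2 c1 c0)) g.

Let P := quad c2 c1 c0.

Lemma quad_contents_dvd1 : (zcontents P %| 1)%Z.
Proof.
have /polyOverP cP : P \is a polyOver (dvdz (zcontents P)).
  by rewrite -dvdz_contents dvdzz.
move: (cP 0%N) (cP 1%N) (cP 2%N); rewrite !coef_quad /= => c0P c1P c2P.
by rewrite -[X in (_ %| X)%Z]c_coprime !dvdz_gcd c0P c1P c2P.
Qed.

Lemma quad_neq0 : P != 0.
Proof. by apply: contraTneq quad_contents_dvd1 => ->; rewrite zcontents0. Qed.

Lemma dvdp_quad_of_root (F : {poly int}) : root (mapZ F) g -> P %| F.
Proof.
move=> F_root; apply/Pdiv.Idomain.modp_eq0P.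
have size_mod : (size (F %% P)%R <= 2)%N.
  by rewrite -ltnS (leq_trans (Pdiv.Idomain.ltn_modpN0 _ quad_neq0)) ?size_quad.
have root_mod : root (mapZ (F %% P)) g.
  have := congr1 (fun q => (mapZ q).[g]) (Pdiv.Idomain.divp_eq F P).
  rewrite /= linearZ /= hornerZ (rootP F_root) mulr0 rmorphD rmorphM /=.
  by rewrite hornerD hornerM (rootP g_root) mulr0 add0r => /esym/rootP.
exact: nonreal_root_size_le2 gNR size_mod root_mod.
Qed.

Lemma int_in_gZg (m : int) :
  (exists p : {poly int}, m%:~R = g * (mapZ p).[g]) <-> (c0 %| m)%Z.
Proof.
split=> [[p mE] | /dvdzP[k ->]].
  have F_root : root (mapZ ('X * p - m%:P)) g.
    by rewrite rootE rmorphB rmorphM /= map_polyX map_polyC !hornerE -mE subrr.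
  have := dvdz_coef0 quad_contents_dvd1 (dvdp_quad_of_root F_root).
  by rewrite coefB coefXM coefC sub0r rpredN coef_quad.
exists ((- (k * c1))%:P - (k * c2)%:P * 'X).
have c0E : c0%:~R = - (c2%:~R * g ^+ 2 + c1%:~R * g) :> algC.
  by apply/eqP; rewrite -addr_eq0 addrC -horner_quad (rootP g_root).
rewrite intrM c0E rmorphB rmorphM /= map_polyX !map_polyC /= !hornerE.
rewrite !rmorphN /= !intrM; ring.
Qed.

End IntegersInGZg.

Lemma inZinvpow_addr (a z w : algC) :
  inZinvpow a w -> inZinvpow a (z + w) <-> inZinvpow a z.
Proof.
case=> p wE; split=> [[s zwE] | [s zE]].
  by exists (s - p); rewrite rmorphB /= hornerD hornerN mulrDr mulrN -zwE -wE addrK.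
by exists (s + p); rewrite rmorphD /= hornerD mulrDr -zE -wE.
Qed.

Lemma inZpow_mul_addn (a z : algC) (k : nat) :
  inZpow a z -> inZpow a (a * z + k%:R).
Proof.
case=> p ->; exists ('X * p + k%:Z%:P).
by rewrite rmorphD rmorphM /= map_polyX map_polyC !hornerE.
Qed.

Theorem mainTheorem6 (alpha : algC) (a0 a1 a2 : int)
  (hQi : inQi alpha) (hnreal : alpha \isn't Num.real) (habs : 1 < `|alpha|)
  (hcop : gcdz (gcdz a0 a1) a2 = 1) (ha2 : 0 < a2)
  (hroot : a2%:~R * alpha ^+ 2 + a1%:~R * alpha + a0%:~R = 0 :> algC)
  (N : algC) (hN : Lambda alpha N) :
  exists r : int, forall d : nat, (d < `|a0|)%N ->
    (Lambda alpha (alpha * N + d%:R) <-> (a2 %| d%:Z - r)%Z).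
Proof.
have alpha_neq0 : alpha != 0 by apply: contraNneq hnreal => ->; rewrite real0.
have inv_nreal : alpha^-1 \isn't Num.real by rewrite realV.
have inv_root : root (mapZ (quad a0 a1 a2)) alpha^-1.
  apply/rootP; rewrite horner_quad -[RHS](mulr0 (alpha^-1 ^+ 2)) -hroot.
  by field.
case: hN => [N_pow [q NE]].
exists (- q`_0) => d _; rewrite opprK [_ + q`_0]addrC.
set tail := alpha^-1 * (mapZ (drop_poly 1 q)).[alpha^-1].
have tail_in : inZinvpow alpha tail by exists (drop_poly 1 q).
have alphaNE : alpha * N + d%:R = (q`_0 + d%:Z)%:~R + tail.
  by rewrite NE mulrA divff // mul1r horner_coef0_drop1 intrD addrAC.
rewrite -(int_in_gZg inv_nreal hcop inv_root) /Lambda.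
rewrite [in inZinvpow _ _]alphaNE (inZinvpow_addr _ tail_in).
by split=> [[] | ] //; split=> //; apply: inZpow_mul_addn.
Qed.
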